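(* Let $\alpha$ be a composition and $n\ge1$. If $\alpha<_c\beta$ and $\beta/\!\!/\alpha$ is an nc border strip with $n$ boxes, then there exists $w\in CRHW_n$ with $w(\alpha)=\beta$.
   Context: A composition is a finite sequence $\alpha=(\alpha_1,\dots,\alpha_k)$ of positive integers; $\ell(\alpha)=k$. Its diagram is the set of boxes $(i,j)$, $1\le i\le\ell(\alpha)$, $1\le j\le\alpha_i$, rows numbered top to bottom, columns left to right. For compositions $\gamma=(\gamma_1,\dots,\gamma_l)$, $\delta$ write $\gamma\lessdot_c\delta$ if $\delta=(1,\gamma_1,\dots,\gamma_l)$ or $\delta=(\gamma_1,\dots,\gamma_k+1,\dots,\gamma_l)$ for some $k$ with $\gamma_i\neq\gamma_k$ for all $i<k$; $<_c$ is the transitive closure. For $\gamma<_c\delta$, $\delta/\!\!/\gamma$ is the set of boxes of $\delta$ not in the inner shape, the inner shape being the boxes $(\ell(\delta)-\ell(\gamma)+i,j)$, $1\le i\le\ell(\gamma)$, $1\le j\le\gamma_i$. $\mathrm{supp}(\beta/\!\!/\alpha)$ is the set of columns containing a box of $\beta/\!\!/\alpha$; $\beta/\!\!/\alpha$ is an interval shape if this set is a set of consecutive integers. An interval shape is an nc border strip if (1) whenever $(i,1),(i,2)\in\beta/\!\!/\alpha$, the box $(i,1)$ is the bottommost box of column 1 of $\beta/\!\!/\alpha$, and (2) whenever $(i,j),(i,j+1)\in\beta/\!\!/\alpha$ with $j\ge2$, the box $(i,j)$ is the topmost box of column $j$ of $\beta/\!\!/\alpha$. Box-adding operators: $\mathfrak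 t_1(\alpha)=(1,\alpha_1,\dots,\alpha_k)$; for $i\ge2$, $\mathfrak t_i(\alpha)$ increases the leftmost part of $\alpha$ equal to $i-1$ by $1$, and is $0$ if there is no such part; $\mathfrak t_i(0)=0$. A word $w=\mathfrak t_{i_1}\cdots\mathfrak t_{i_n}$ acts by $w(\alpha)=\mathfrak t_{i_1}(\cdots\mathfrak t_{i_n}(\alpha))$. It is a reverse hookword if $i_1\le\cdots\le i_{k+1}>i_{k+2}>\cdots>i_n$ for some $0\le k\le n-1$, connected if $\{i_1,\dots,i_n\}$ is a set of consecutive integers; $CRHW_n$ is the set of connected reverse hookwords of length $n$. *)

From mathcomp Require Import all_boot.
Set Implicit Arguments. Unset Strict Implicit. Unset Printing Implicit Defensive.

Definition composition (a : seq nat) : bool := all (fun x => 0 < x) a.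

(* gamma <.c delta (0-indexed k) *)
Definition coverc (g d : seq nat) : Prop :=
  d = 1 :: g \/
  exists k, k < size g /\ d = incr_nth g k /\
            (forall i, i < k -> nth 0 g i != nth 0 g k).

Inductive ltc : seq nat -> seq nat -> Prop :=
| ltc_cover g d : coverc g d -> ltc g d
| ltc_step g d e : coverc g d -> ltc d e -> ltc g e.

(* box (i,j) (1-indexed, rows top to bottom) lies in the diagram of b *)
Definition in_diag (b : seq nat) (i j : nat) : bool :=
  [&& 1 <= i, i <= size b, 1 <= j & j <= nth 0 b i.-1].

(* box (i,j) lies in the inner shape of alpha placed at the bottom of beta *)
Definition in_inner (b a : seq nat) (i j : nat) : bool :=
  [&& size b - size a < i, i <= size b, 1 <= j &
      j <= nth 0 a (i - (size b - size a)).-1].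

Definition in_skew (b a : seq nat) (i j : nat) : bool :=
  in_diag b i j && ~~ in_inner b a i j.

Definition in_supp (b a : seq nat) (j : nat) : Prop := exists i, in_skew b a i j.

Definition interval_shape (b a : seq nat) : Prop :=
  forall j1 j j2, j1 <= j <= j2 -> in_supp b a j1 -> in_supp b a j2 -> in_supp b a j.

Definition nc_border_strip (b a : seq nat) : Prop :=
  interval_shape b a /\
  (forall i, in_skew b a i 1 -> in_skew b a i 2 ->
     forall i', in_skew b a i' 1 -> i' <= i) /\
  (forall i j, 2 <= j -> in_skew b a i j -> in_skew b a i j.+1 ->
     forall i', in_skew b a i' j -> i <= i').

Definition skew_size (b a : seq nat) : nat :=
  \sum_(1 <= i < (size b).+1) \sum_(1 <= j < (nth 0 b i.-1).+1) in_skew b a i j.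

(* box-adding operators; None plays the role of 0. Index 0 is not an operator. *)
Definition top (i : nat) (a : seq nat) : option (seq nat) :=
  match i with
  | 0 => None
  | 1 => Some (1 :: a)
  | i'.+1 => if i' \in a then Some (incr_nth a (index i' a)) else None
  end.

(* w = t_{i1} ... t_{in} acts by applying t_{in} first *)
Definition act_word (w : seq nat) (a : seq nat) : option (seq nat) :=
  foldr (fun i acc => obind (top i) acc) (Some a) w.

Definition reverse_hookword (w : seq nat) : Prop :=
  exists k, k < size w /\ sorted leq (take k.+1 w) /\
            sorted (fun x y => y < x) (drop k w).

Definition connected_word (w : seq nat) : Prop :=
  forall x y z, x \in w -> z \in w -> x <= y <= z -> y \in w.

(* w in CRHW_n (letters are operator indices, hence >= 1) *)
Definition CRHW (n : nat) (w : seq nat) : Prop :=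
  size w = n /\ all (fun i => 0 < i) w /\ reverse_hookword w /\ connected_word w.

From mathcomp Require Import all_boot zify.
Set Implicit Arguments. Unset Strict Implicit. Unset Printing Implicit Defensive.

(* Pad alpha with zero rows on top to the height of beta.  Every operator
   [t_j] then lengthens the topmost row of length [j - 1] (for [j = 1] the
   lowest zero row), and since beta is reached from alpha, the inner shape lies
   inside beta and satisfies a flag condition ([flagged]).
   Let [d] be the last column of the strip and call the box where [t_j] acts in
   column [j] its entry box.  The entry boxes with a right neighbour, or in
   column [d], are filled first, column by column from the left, by a strictly
   decreasing word starting with [t_d]; by the nc conditions they begin right
   after the inner shape in each row.  Every other box of column [j] then ends
   its row, and these are filled column by column from [d] down to [1] by
   [t_1^m_1 ... t_d^m_d], the flag condition guaranteeing that [t_j] always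
   hits one of them.  The letters used are exactly the columns of the strip,
   which form an interval. *)

Lemma index_first (s : seq nat) x i : i < size s -> nth 0 s i = x ->
  (forall k, k < i -> nth 0 s k != x) -> index x s = i.
Proof.
elim: s i => [|y s IH] [|i] //=; first by move=> _ ->; rewrite eqxx.
move=> lti sx before; have /negbTE := before 0 erefl; rewrite /= eq_sym => ->.
by congr S; apply: IH => // k ltki; apply: (before k.+1).
Qed.

Lemma sumn_incr_nth (a : seq nat) k : k < size a -> sumn (incr_nth a k) = (sumn a).+1.
Proof. by elim: a k => [|x a IH] [|k] //= ltk; rewrite IH // addnS. Qed.

Lemma nth_leq_sumn (s : seq nat) i : nth 0 s i <= sumn s.
Proof.
by elim: s i => [|x s IH] [|i] //=; [apply: leq_addr | apply: leq_trans (IH i) (leq_addl _ _)].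
Qed.

Lemma sumn_nth (s : seq nat) : sumn s = \sum_(0 <= i < size s) nth 0 s i.
Proof. by rewrite sumnE (big_nth 0). Qed.

Lemma sum_nat_gtn a m : \sum_(1 <= j < m.+1) ((a < j) : nat) = m - a.
Proof.
elim: m => [|m IH]; first by rewrite big_geq.
by rewrite big_nat_recr //= IH; case: (ltnP a m.+1) => /=; lia.
Qed.

Lemma eq_in_mkseq (f g : nat -> nat) n : {in gtn n, f =1 g} -> mkseq f n = mkseq g n.
Proof.
move=> eq_fg; apply: (@eq_from_nth _ 0); rewrite !size_mkseq // => i ltin.
by rewrite !nth_mkseq // eq_fg.
Qed.

Lemma count_iota_predD1 (p : pred nat) m n : m < n -> p m ->
  count p (iota 0 n) = (count (predD1 p m) (iota 0 n)).+1.
Proof.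
move=> ltmn pm; have -> : n = m + (n - m.+1).+1 by lia.
rewrite iotaD !count_cat add0n -addnS; congr addn.
  by apply: eq_in_count => r; rewrite mem_iota add0n => ltrm /=; rewrite (ltn_eqF ltrm).
rewrite /= pm eqxx /= add1n; congr S.
by apply: eq_in_count => r; rewrite mem_iota => /andP [ltmr _] /=; rewrite (gtn_eqF ltmr).
Qed.

Lemma count_ltn_iota z n : z <= n -> count (fun r => r < z) (iota 0 n) = z.
Proof.
move=> le_zn; rewrite -(subnKC le_zn) iotaD count_cat add0n.
rewrite (eq_in_count (a2 := predT)) ?count_predT ?size_iota; last first.
  by move=> r; rewrite mem_iota.
rewrite (eq_in_count (a2 := pred0)) ?count_pred0 ?addn0 // => r.
by rewrite mem_iota => /andP [le_zr _] /=; rewrite ltnNge le_zr.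
Qed.

Lemma sorted_nseq_cat m x s : sorted leq s -> all (leq x) s -> sorted leq (nseq m x ++ s).
Proof.
move=> sorted_s ge_x; elim: m => //= m IH.
by rewrite (path_sortedE leq_trans) IH andbT all_cat ge_x andbT all_nseq leqnn orbT.
Qed.

(** * Words acting on compositions *)

Lemma act_word_cat u v a : act_word (u ++ v) a = obind (act_word u) (act_word v a).
Proof.
rewrite /act_word foldr_cat; case: (foldr _ _ v) => [b|] //=.
by elim: u => //= x u ->.
Qed.

Lemma top_composition j a b : composition a -> top j a = Some b ->
  [/\ composition b, size a <= size b & sumn b = (sumn a).+1].
Proof.
case: j => [|[|j]] //= a_comp; first by case=> <- /=; rewrite a_comp leqnSn.
case: ifP => // a_j [<-].
have lt_idx : index j.+1 a < size a by rewrite index_mem.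
split; last exact: sumn_incr_nth; last by rewrite size_incr_nth lt_idx.
apply/(all_nthP 0) => i; rewrite size_incr_nth lt_idx nth_incr_nth => lti.
by move/(all_nthP 0): a_comp => /(_ i lti); lia.
Qed.

Lemma act_word_composition w a b : composition a -> act_word w a = Some b ->
  [/\ composition b, size a <= size b & sumn b = sumn a + size w].
Proof.
move=> a_comp; elim: w b => [|x w IH] b /=; first by case=> <-; rewrite addn0 leqnn.
rewrite -/(act_word w a); case E: (act_word w a) => [c|] //= c_b.
have [c_comp le_ac sum_c] := IH c E.
have [b_comp le_cb sum_b] := top_composition c_comp c_b.
by split => //; [apply: leq_trans le_cb | rewrite sum_b sum_c addnS].
Qed.

Lemma coverc_top g d : composition g -> coverc g d -> exists j, top j g = Some d.
Proof.
move=> g_comp [->|[k [ltk [-> before]]]]; first by exists 1.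
have gk_gt0 : 0 < nth 0 g k by move/(all_nthP 0): g_comp; apply.
exists (nth 0 g k).+1; case E: (nth 0 g k) gk_gt0 => [|y] // _ /=.
have g_y : y.+1 \in g by rewrite -E mem_nth.
rewrite g_y; congr (Some (incr_nth g _)).
by apply: index_first => // i lti; rewrite -E; apply: before.
Qed.

Lemma ltc_act_word a b : composition a -> ltc a b -> exists w, act_word w a = Some b.
Proof.
move=> + ltab; elim: ltab => [g d cov|g d e cov _ IH] g_comp.
  by have [j gd] := coverc_top g_comp cov; exists [:: j].
have [j gd] := coverc_top g_comp cov.
have [d_comp _ _] := top_composition g_comp gd.
have [w dw] := IH d_comp.
by exists (w ++ [:: j]); rewrite act_word_cat /= gd.
Qed.

(** * Compositions padded with zero rows *)

(* A composition is modelled by padding it with zero rows on top; [ztop 1]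
   fills the lowest zero row, which is [top 1] prepending a part 1. *)
Definition ztop (j : nat) (P : seq nat) : option (seq nat) :=
  match j with
  | 0 => None
  | 1 => let z := find (fun x => x != 0) P in
         if z == 0 then None else Some (incr_nth P z.-1)
  | j'.+1 => if j' \in P then Some (incr_nth P (index j' P)) else None
  end.

Definition zact (w : seq nat) (P : seq nat) : option (seq nat) :=
  foldr (fun i acc => obind (ztop i) acc) (Some P) w.

Lemma zact_cat u v P : zact (u ++ v) P = obind (zact u) (zact v P).
Proof.
rewrite /zact foldr_cat; case: (foldr _ _ v) => [Q|] //=.
by elim: u => //= x u ->.
Qed.

Lemma find_nonzero_pad m s : composition s ->
  find (fun x => x != 0) (nseq m 0 ++ s) = m.
Proof.
move=> s_comp; rewrite find_cat has_nseq andbF size_nseq.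
case: s s_comp => [|x s] /=; first by rewrite addn0.
by case/andP => x_gt0 _; rewrite -lt0n x_gt0 addn0.
Qed.

Lemma incr_nth_pad m R k : incr_nth (nseq m 0 ++ R) (m + k) = nseq m 0 ++ incr_nth R k.
Proof. by elim: m => //= m ->. Qed.

Lemma incr_nth_pad_last m R : incr_nth (nseq m.+1 0 ++ R) m = nseq m 0 ++ 1 :: R.
Proof. by elim: m => //= m ->. Qed.

Lemma mem_nseq0 x m : (x.+1 \in nseq m 0) = false.
Proof. by elim: m. Qed.

Lemma ztop_unpad j z Q P : composition Q -> ztop j (nseq z 0 ++ Q) = Some P ->
  exists z' Q', P = nseq z' 0 ++ Q' /\ top j Q = Some Q'.
Proof.
move=> Q_comp; case: j => [|[|j]] //=.
  rewrite find_nonzero_pad //; case: z => [|z] //= [<-].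
  by exists z, (1 :: Q); rewrite -incr_nth_pad_last.
rewrite mem_cat mem_nseq0; case: ifP => //= Q_j [<-].
rewrite index_cat mem_nseq0 size_nseq incr_nth_pad Q_j.
by exists z, (incr_nth Q (index j.+1 Q)).
Qed.

Lemma zact_unpad w z Q P : composition Q -> composition P ->
  zact w (nseq z 0 ++ Q) = Some P -> act_word w Q = Some P.
Proof.
move=> Q_comp P_comp wP.
suff [z' [Q' [EP ->]]] : exists z' Q', P = nseq z' 0 ++ Q' /\ act_word w Q = Some Q'.
  by move: P_comp; rewrite EP; case: z' {EP}.
elim: w P {P_comp} wP => [|x w IH] P /=; first by case=> <-; exists z, Q.
rewrite -/(zact w _); case E: (zact w _) => [R|] //= RP.
have [z1 [Q1 [ER Q_Q1]]] := IH R E; subst R.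
have [Q1_comp _ _] := act_word_composition Q_comp Q_Q1.
have [z2 [Q2 [-> Q1_Q2]]] := ztop_unpad Q1_comp RP.
by exists z2, Q2; rewrite -/(act_word w Q) Q_Q1.
Qed.

Lemma zact_pad w Q Q' z : composition Q -> act_word w Q = Some Q' ->
  size Q' <= z + size Q ->
  zact w (nseq z 0 ++ Q) = Some (nseq (z + size Q - size Q') 0 ++ Q').
Proof.
move=> Q_comp; elim: w Q' => [|x w IH] Q' /=; first by case=> <- _; rewrite addnK.
rewrite -/(act_word w Q); case E: (act_word w Q) => [R|] //= RQ' le_Q'.
have [R_comp _ _] := act_word_composition Q_comp E.
have [_ le_RQ' _] := top_composition R_comp RQ'.
rewrite -/(zact w _) (IH R E (leq_trans le_RQ' le_Q')) /=.
case: x RQ' => [|[|x]] //=.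
  case=> EQ'; subst Q'; rewrite find_nonzero_pad //=.
  have -> : z + size Q - size R = (z + size Q - (size R).+1).+1 by move: le_Q' => /=; lia.
  by rewrite incr_nth_pad_last.
rewrite mem_cat mem_nseq0; case: ifP => //= R_x [<-].
by rewrite index_cat mem_nseq0 size_nseq incr_nth_pad size_incr_nth index_mem R_x.
Qed.

Lemma ztopP j P P' : ztop j P = Some P' ->
  exists2 q, P' = incr_nth P q /\ q < size P &
   (j = 1 /\ nth 0 P q = 0) \/
   [/\ 2 <= j, nth 0 P q = j.-1 & forall r, r < q -> nth 0 P r != j.-1].
Proof.
case: j => [|[|x]] //=.
  case E: (find _ P) => [|z] //= [<-]; exists z.
    by split => //; have := find_size (fun x => x != 0) P; rewrite E.
  left; split => //; have := @before_find _ 0 (fun x => x != 0) P z.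
  by rewrite E => /(_ (ltnSn z)) /negbFE/eqP.
case: ifP => // P_x [<-]; exists (index x.+1 P); first by rewrite index_mem.
right; split; rewrite ?nth_index // => r ltr.
by have := @before_find _ 0 (pred1 x.+1) P r ltr => /= ->.
Qed.

(* The invariant of the shapes [P] reached from a padded shape [A]: a row
   can only grow into column [j >= 2] once every row above it that started at
   length [j - 1] has. *)
Definition flagged (A P : seq nat) :=
  (forall r, nth 0 A r <= nth 0 P r) /\
  (forall r r' j, 2 <= j -> nth 0 A r < j -> j <= nth 0 P r -> r' < r ->
     nth 0 A r' = j.-1 -> j <= nth 0 P r').

Lemma zact_flagged A w P : zact w A = Some P -> flagged A P.
Proof.
elim: w P => [|x w IH] P /=; first by case=> <-; split => // r r' j _; lia.
rewrite -/(zact w A); case E: (zact w A) => [R|] //= RP.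
have [le_AR flagR] := IH R E.
have [q [-> ltq] hq] := ztopP RP.
have le_incr r : nth 0 R r <= nth 0 (incr_nth R q) r.
  by rewrite nth_incr_nth leq_addl.
split=> [r|r r' j ge2j ltAr leP ltr' Ar']; first exact: leq_trans (le_AR r) (le_incr r).
apply: leq_trans (le_incr r'); move: leP; rewrite nth_incr_nth.
case: (eqVneq q r) => [eqqr|_] /=; last by rewrite add0n => leR; apply: flagR leR ltr' Ar'.
subst q.
case: (leqP j (nth 0 R r)) => [leR _|ltR leR]; first by apply: flagR leR ltr' Ar'.
have Rr : nth 0 R r = j.-1 by lia.
case: hq => [[_ Rq0]|[_ Rqx before]]; first by move: Rr ge2j; rewrite Rq0; lia.
have := before r' ltr'; rewrite -Rqx Rr -Ar'; have := le_AR r'; lia.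
Qed.

(* [t_(v+1)] always raises the topmost row of length [v], so repeating it
   raises a set [p] of such rows as long as no row of length [v] lies above
   a row of [p] without being in [p] itself. *)
Lemma zact_nseq_rows v (P : seq nat) (p : pred nat) : 0 < v ->
  (forall r, r < size P -> p r -> nth 0 P r = v) ->
  (forall r r', r < size P -> p r -> r' < r -> nth 0 P r' = v -> p r') ->
  zact (nseq (count p (iota 0 (size P))) v.+1) P =
    Some (mkseq (fun r => nth 0 P r + p r) (size P)).
Proof.
case: v => // v _; move eq_k: (count _ _) => k.
elim: k P p eq_k => [|k IH] P p cnt_p p_v p_closed.
  rewrite -{1}(mkseq_nth 0 P); congr Some; apply: eq_in_mkseq => r.
  have /hasPn/(_ r) : ~~ has p (iota 0 (size P)) by rewrite has_count cnt_p.
  by rewrite mem_iota /= => /[apply] /negbTE ->; rewrite addn0.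
have has_p : has p (iota 0 (size P)) by rewrite has_count cnt_p.
set m := find p (iota 0 (size P)).
have ltm : m < size P by have := has_find p (iota 0 (size P)); rewrite size_iota has_p.
have pm : p m by have := nth_find 0 has_p; rewrite nth_iota.
have Pm := p_v m ltm pm.
have idx : index v.+1 P = m.
  apply: index_first => // r ltr; apply/eqP => Pr.
  have := @before_find _ 0 p _ r ltr; rewrite nth_iota ?(ltn_trans ltr) //.
  by rewrite (p_closed m r ltm pm ltr Pr).
have size_incr : size (incr_nth P m) = size P by rewrite size_incr_nth ltm.
rewrite -(addn1 k) nseqD zact_cat /= -Pm mem_nth // Pm idx /=.
have := IH (incr_nth P m) (predD1 p m); rewrite size_incr => -> /=.
- congr Some; apply: eq_mkseq => r; rewrite nth_incr_nth.
  by case: (eqVneq m r) => [<-|//]; rewrite pm /= addn0 add1n addn1.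
- by apply/eqP; rewrite -eqSS -cnt_p (count_iota_predD1 ltm pm).
- move=> r ltr /andP [neq_rm pr]; rewrite nth_incr_nth eq_sym (negbTE neq_rm).
  exact: p_v.
- move=> r r' ltr /andP [neq_rm pr] ltr'; rewrite nth_incr_nth.
  case: (eqVneq m r') => [<-|neq_mr']; first by rewrite Pm; lia.
  by rewrite add0n /= => Pr'; apply: p_closed ltr pr ltr' Pr'.
Qed.

Lemma zact_nseq1 z Q : composition Q ->
  zact (nseq z 1) (nseq z 0 ++ Q) = Some (nseq z 1 ++ Q).
Proof.
move=> Q_comp.
suff zact_k k : k <= z ->
    zact (nseq k 1) (nseq z 0 ++ Q) = Some (nseq (z - k) 0 ++ nseq k 1 ++ Q).
  by rewrite zact_k // subnn.
elim: k => [|k IH] lekz /=; first by rewrite subn0.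
rewrite -/(zact _ _) IH ?(ltnW lekz) //= find_nonzero_pad; last first.
  by rewrite /composition all_cat all_nseq orbT.
have -> : z - k = (z - k.+1).+1 by lia.
by rewrite incr_nth_pad_last.
Qed.

(** * The skew shape beta // alpha *)

Definition apad (alpha beta : seq nat) := nseq (size beta - size alpha) 0 ++ alpha.

Lemma zact_apad w alpha beta : composition alpha -> act_word w alpha = Some beta ->
  zact w (apad alpha beta) = Some beta.
Proof.
move=> alpha_comp w_ab; have [_ size_le _] := act_word_composition alpha_comp w_ab.
by rewrite /apad (zact_pad alpha_comp w_ab) subnK // ?subnn.
Qed.

(* Rows are numbered from 0 here: [skew alpha beta r j] is the box (r + 1, j)
   of beta // alpha. *)
Definition skew (alpha beta : seq nat) r j :=
  (nth 0 (apad alpha beta) r < j) && (j <= nth 0 beta r).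

Definition occupied (alpha beta : seq nat) j :=
  has (fun r => skew alpha beta r j) (iota 0 (size beta)).

Section Skew.
Variables alpha beta : seq nat.

Lemma size_apad : size alpha <= size beta -> size (apad alpha beta) = size beta.
Proof. by move=> le_ab; rewrite size_cat size_nseq subnK. Qed.

Lemma nth_apad r : nth 0 (apad alpha beta) r =
  if r < size beta - size alpha then 0 else nth 0 alpha (r - (size beta - size alpha)).
Proof. by rewrite nth_cat size_nseq nth_nseq if_same. Qed.

Lemma skew_row_lt r j : skew alpha beta r j -> r < size beta.
Proof.
case/andP => lt_j le_j; rewrite ltnNge; apply/negP => ler.
by move: le_j; rewrite nth_default //; move: lt_j; case: j.
Qed.

Lemma skew_col_gt0 r j : skew alpha beta r j -> 0 < j.
Proof. by case/andP => lt_j _; apply: leq_ltn_trans lt_j. Qed.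

Lemma occupiedP j : reflect (exists r, skew alpha beta r j) (occupied alpha beta j).
Proof.
apply: (iffP hasP) => [[r _ skr]|[r skr]]; first by exists r.
by exists r; rewrite // mem_iota add0n (skew_row_lt skr).
Qed.

Hypothesis size_le : size alpha <= size beta.

Lemma in_skewE i j : in_skew beta alpha i j = (0 < i) && skew alpha beta i.-1 j.
Proof.
rewrite /in_skew /in_diag /in_inner /skew nth_apad.
case: i => [|r] //=; case: (ltnP r (size beta)) => ltr; last first.
  by rewrite (nth_default 0 ltr); case: ifP => _; lia.
case: ifP => lt_shift; first by have -> : (size beta - size alpha < r.+1) = false; lia.
by have -> : (r.+1 - (size beta - size alpha)).-1 = r - (size beta - size alpha); lia.
Qed.

Lemma in_suppE j : in_supp beta alpha j <-> occupied alpha beta j.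
Proof.
split=> [[i]|/occupiedP [r skr]]; last by exists r.+1; rewrite in_skewE.
by rewrite in_skewE => /andP [_ skr]; apply/occupiedP; exists i.-1.
Qed.

Lemma skew_size_occupied : 0 < skew_size beta alpha -> exists j, occupied alpha beta j.
Proof.
rewrite lt0n sum_nat_seq_neq0 => /hasP [i _ /andP [_]].
rewrite sum_nat_seq_neq0 => /hasP [j _ /andP [_]].
by rewrite eqb0 negbK in_skewE => /andP [_ skr]; exists j; apply/occupiedP; exists i.-1.
Qed.

Lemma skew_size_sumn : (forall r, nth 0 (apad alpha beta) r <= nth 0 beta r) ->
  skew_size beta alpha = sumn beta - sumn alpha.
Proof.
move=> le_ab; rewrite /skew_size big_add1 /=.
rewrite (@eq_big_nat _ _ _ 0 (size beta) _
   (fun r => nth 0 beta r - nth 0 (apad alpha beta) r)); last first.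
  move=> r _; rewrite -sum_nat_gtn; apply: eq_big_nat => j /andP [_ le_j].
  by rewrite in_skewE /skew /= (_ : j <= _) ?andbT // -ltnS.
rewrite sumnB // (sumn_nth beta) -(size_apad size_le) -sumn_nth.
by rewrite sumn_cat sumn_nseq.
Qed.

End Skew.

(** * A connected reverse hookword filling an nc border strip *)

Section StripWord.
Variables alpha beta : seq nat.
Hypothesis alpha_comp : composition alpha.
Hypothesis beta_comp : composition beta.
Hypothesis size_le : size alpha <= size beta.
Hypothesis beta_flagged : flagged (apad alpha beta) beta.
Hypothesis strip : nc_border_strip beta alpha.
Hypothesis skew_size_gt0 : 0 < skew_size beta alpha.

Local Notation A := (apad alpha beta).
Local Notation shift := (size beta - size alpha).
Local Notation skew := (skew alpha beta).
Local Notation occupied := (occupied alpha beta).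

Lemma apad_le r : nth 0 A r <= nth 0 beta r.
Proof. exact: beta_flagged.1. Qed.

Lemma skew_flag r r' j : 2 <= j -> skew r j -> r' < r ->
  nth 0 A r' = j.-1 -> j <= nth 0 beta r'.
Proof. by move=> ge2j /andP [ltA leB]; apply: beta_flagged.2. Qed.

Lemma skew_nc1 r r' : skew r 1 -> skew r 2 -> skew r' 1 -> r' <= r.
Proof.
have [_ [nc1 _]] := strip => sk1 sk2 sk1'.
by apply: (nc1 r.+1 _ _ r'.+1); rewrite in_skewE.
Qed.

Lemma skew_nc2 r r' j : 2 <= j -> skew r j -> skew r j.+1 -> skew r' j -> r <= r'.
Proof.
have [_ [_ nc2]] := strip => ge2j skj skj1 skj'.
by apply: (nc2 r.+1 j ge2j _ _ r'.+1); rewrite in_skewE.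
Qed.

Lemma occupied_interval x y z : x <= y <= z -> occupied x -> occupied z -> occupied y.
Proof.
move=> xyz /(in_suppE size_le) ox /(in_suppE size_le) oz.
by apply/(in_suppE size_le); apply: strip.1 ox oz.
Qed.

Lemma beta_gt0 r : r < size beta -> 0 < nth 0 beta r.
Proof. by move=> ltr; move/(all_nthP 0): beta_comp; apply. Qed.

Lemma skew1 r : skew r 1 = (r < shift).
Proof.
rewrite /skew nth_apad; case: ifP => lt_shift /=.
  by apply: beta_gt0; apply: leq_trans lt_shift (leq_subr _ _).
case: (ltnP r (size beta)) => ltr; last by rewrite (nth_default _ ltr) andbF.
have : 0 < nth 0 alpha (r - shift) by move/(all_nthP 0): alpha_comp; apply; lia.
by case: (nth 0 alpha _).
Qed.

Lemma occupied_le_sumn j : occupied j -> j <= sumn beta.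
Proof.
by case/occupiedP => r /andP [_ le_j]; apply: leq_trans le_j (nth_leq_sumn _ _).
Qed.

Lemma occupied_exists : exists j, occupied j.
Proof. exact: skew_size_occupied. Qed.

Definition last_col := ex_maxn occupied_exists occupied_le_sumn.

Lemma occupied_last_col : occupied last_col.
Proof. by rewrite /last_col; case: ex_maxnP. Qed.

Lemma skew_le_last_col r j : skew r j -> j <= last_col.
Proof.
move=> skj; rewrite /last_col; case: ex_maxnP => i _; apply.
by apply/occupiedP; exists r.
Qed.

Lemma last_col_gt0 : 0 < last_col.
Proof. by case/occupiedP: occupied_last_col => r /skew_col_gt0. Qed.

(* The row in which [t_j] puts the box of column [j]: the topmost box of the
   column for [j >= 2], and the lowest padding row for [j = 1]. *)
Definition entry_row j :=
  if j == 1 then shift.-1 else find (fun r => skew r j) (iota 0 (size beta)).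

Lemma entry_row_min j r : 2 <= j -> r < entry_row j -> ~~ skew r j.
Proof.
rewrite /entry_row; case: (eqVneq j 1) => [->//|_] _ ltr.
have ltrN : r < size beta.
  by apply: leq_trans ltr _; rewrite -[X in _ <= X](size_iota 0) find_size.
by have := @before_find _ 0 (fun r => skew r j) _ r ltr; rewrite nth_iota // => ->.
Qed.

Lemma skew_entry_row j : occupied j -> skew (entry_row j) j.
Proof.
case: j => [|[|j]] occ.
- by case/occupiedP: occ => r /skew_col_gt0.
- by case/occupiedP: occ => r; rewrite /entry_row /= !skew1; lia.
- have := nth_find 0 occ; rewrite nth_iota // -[X in _ < X](size_iota 0).
  by rewrite -has_find.
Qed.

(* The boxes filled by the decreasing part of the word.  By the nc conditions
   every box with a right neighbour is an entry box, so in each row these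
   boxes start right after the inner shape and are consecutive. *)
Definition dec_box r j := [&& skew r j, r == entry_row j & (j == last_col) || skew r j.+1].
Definition dec_col j := dec_box (entry_row j) j.

Lemma dec_box_skew r j : dec_box r j -> skew r j.
Proof. by case/and3P. Qed.

Lemma dec_box_entry_row r j : dec_box r j -> r = entry_row j.
Proof. by case/and3P => _ /eqP. Qed.

Lemma dec_box_col r j : dec_box r j -> dec_col j.
Proof. by move=> dec_rj; rewrite /dec_col -(dec_box_entry_row dec_rj). Qed.

Lemma dec_box_right r j : skew r j -> skew r j.+1 -> dec_box r j.
Proof.
move=> skj skj1; rewrite /dec_box skj skj1 orbT andbT /=.
case: j skj skj1 => [|[|j]] skj skj1.
- by move: (skew_col_gt0 skj).
- have ltr : r < shift by rewrite -skew1.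
  have sk_last : skew shift.-1 1 by rewrite skew1; lia.
  by have := skew_nc1 skj skj1 sk_last; rewrite /entry_row /=; lia.
- have ge2j : 2 <= j.+2 by [].
  have occ : occupied j.+2 by apply/occupiedP; exists r.
  have le_r := skew_nc2 ge2j skj skj1 (skew_entry_row occ).
  case: (ltnP r (entry_row j.+2)) => [ltr|ger]; last by rewrite eqn_leq le_r ger.
  by move: (entry_row_min ge2j ltr); rewrite skj.
Qed.

Lemma dec_box_prefix r j i : dec_box r j -> nth 0 A r < i <= j -> dec_box r i.
Proof.
move=> dec_rj /andP [lti leij].
suff dec_sub k : nth 0 A r < j - k -> dec_box r (j - k).
  by have := dec_sub (j - i); rewrite (_ : j - (j - i) = i); [apply|lia].
elim: k => [|k IH] ltk; first by rewrite subn0.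
have dec_k : dec_box r (j - k) by apply: IH; lia.
have /andP [_ le_jk] := dec_box_skew dec_k.
apply: dec_box_right; first by rewrite /skew ltk /=; lia.
by rewrite (_ : (j - k.+1).+1 = j - k) ?(dec_box_skew dec_k) //; lia.
Qed.

Fixpoint dec_fill s r :=
  if s is s'.+1 then (if dec_box r s' then s' else dec_fill s' r) else nth 0 A r.

Lemma dec_fill_ge s r : nth 0 A r <= dec_fill s r.
Proof.
elim: s => //= s IH; case: ifP => // /dec_box_skew /andP [lt_s _]; exact: ltnW.
Qed.

Lemma dec_fillP s r :
  dec_fill s r = nth 0 A r \/ (dec_box r (dec_fill s r) /\ dec_fill s r < s).
Proof.
elim: s => [|s IH] /=; first by left.
case: ifP => dec_rs; first by right.
by case: IH => [->|[dec_r lt_s]]; [left | right; split => //; apply: ltn_trans lt_s _].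
Qed.

Lemma dec_fill_ge_box s r j : dec_box r j -> j < s -> j <= dec_fill s r.
Proof.
move=> dec_rj; elim: s => [|s IH] //= lt_js.
case: ifP => dec_rs; first by rewrite -ltnS.
case: (ltnP j s) => [lt_j|ge_j]; first exact: IH.
by move: dec_rs; rewrite (_ : s = j) ?dec_rj //; lia.
Qed.

Lemma dec_fill_le s r : dec_fill s r <= nth 0 beta r.
Proof.
case: (dec_fillP s r) => [->|[dec_r _]]; first exact: apad_le.
by case/andP: (dec_box_skew dec_r).
Qed.

Lemma dec_fill_box s r : dec_box r s -> dec_fill s r = s.-1.
Proof.
move=> dec_rs; have /andP [lt_s _] := dec_box_skew dec_rs.
have lt_fill : dec_fill s r < s by case: (dec_fillP s r) => [->|[_ ->]].
apply/eqP; rewrite eqn_leq -ltnS (ltn_predK lt_s) lt_fill /=.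
case: (ltnP (nth 0 A r) s.-1) => [lt_s1|ge_s1]; last exact: leq_trans ge_s1 (dec_fill_ge _ _).
by apply: dec_fill_ge_box; [apply: (dec_box_prefix dec_rs); rewrite lt_s1 /= | ]; lia.
Qed.

(* So [t_s] acts on the entry row of column [s]; this is where the flag
   condition is used. *)
Lemma dec_fill_above s r q : 2 <= s -> dec_box q s -> r < q -> dec_fill s r != s.-1.
Proof.
move=> ge2s dec_qs ltr; apply/eqP => fill_r.
have skq := dec_box_skew dec_qs.
have not_skr : ~~ skew r s by apply: entry_row_min; rewrite // -(dec_box_entry_row dec_qs).
case: (dec_fillP s r) => [Ar|[]].
  have := skew_flag ge2s skq ltr; rewrite -Ar fill_r => /(_ erefl) le_s.
  by move: not_skr; rewrite /skew -Ar fill_r le_s andbT; lia.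
rewrite fill_r /dec_box => /and3P [_ _ /orP [/eqP last_s|sk_s]].
  by have := skew_le_last_col skq; lia.
by move: sk_s; rewrite (_ : s.-1.+1 = s) ?(negbTE not_skr) //; lia.
Qed.

Definition dec_stage s := mkseq (dec_fill s) (size beta).

Lemma dec_stage1 : dec_stage 1 = A.
Proof. by rewrite -[RHS](mkseq_nth 0) size_apad. Qed.

Lemma dec_stage_skip s : ~~ dec_col s -> dec_stage s.+1 = dec_stage s.
Proof.
move=> not_dec; apply: eq_mkseq => r /=; case: ifP => // dec_rs.
by move: not_dec; rewrite (dec_box_col dec_rs).
Qed.

Lemma dec_stage_S s : dec_col s -> dec_stage s.+1 = incr_nth (dec_stage s) (entry_row s).
Proof.
move=> dec_s; have ltq := skew_row_lt (dec_box_skew dec_s).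
apply: (@eq_from_nth _ 0) => [|r]; first by rewrite size_incr_nth !size_mkseq ltq.
rewrite size_mkseq => ltr.
rewrite nth_incr_nth !nth_mkseq //=.
case: (eqVneq (entry_row s) r) => [<-|neq_qr].
  have := skew_col_gt0 (dec_box_skew dec_s).
  by rewrite -/(dec_col s) dec_s dec_fill_box //; lia.
by case: ifP => // /dec_box_entry_row eq_r; move: neq_qr; rewrite eq_r eqxx.
Qed.

Lemma ztop_dec_stage s : dec_col s -> ztop s (dec_stage s) = Some (dec_stage s.+1).
Proof.
move=> dec_s; have skq := dec_box_skew dec_s; rewrite dec_stage_S //.
case: s dec_s skq => [|[|x]] dec_s skq; first by move: (skew_col_gt0 skq).
  rewrite /= dec_stage1 find_nonzero_pad //.
  by move: skq; rewrite skew1 /entry_row /=; case: (size beta - size alpha).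
have ltq := skew_row_lt skq.
have idx : index x.+1 (dec_stage x.+2) = entry_row x.+2.
  apply: index_first; rewrite ?size_mkseq ?nth_mkseq ?dec_fill_box // => k ltk.
  by rewrite nth_mkseq ?(ltn_trans ltk) //; apply: dec_fill_above dec_s ltk.
have mem_x : x.+1 \in dec_stage x.+2.
  by apply/(nthP 0); exists (entry_row x.+2); rewrite ?size_mkseq // nth_mkseq // dec_fill_box.
by rewrite /= mem_x idx.
Qed.

Definition dec_word k := [seq s <- rev (iota 1 k) | dec_col s].

Lemma dec_word_S k : dec_word k.+1 = if dec_col k.+1 then k.+1 :: dec_word k else dec_word k.
Proof. by rewrite /dec_word -[in iota 1 _](addn1 k) iotaD add1n rev_cat. Qed.

Lemma zact_dec_word k : zact (dec_word k) A = Some (dec_stage k.+1).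
Proof.
elim: k => [|k IH]; first by rewrite dec_stage1.
rewrite dec_word_S; case: ifP => dec_k; last by rewrite IH (@dec_stage_skip k.+1) ?dec_k.
by rewrite /= -/(zact _ _) IH; apply: ztop_dec_stage.
Qed.

Definition dec_final r := dec_fill last_col.+1 r.

Lemma dec_final_ge r : nth 0 A r <= dec_final r.
Proof. exact: dec_fill_ge. Qed.

Lemma dec_final_le r : dec_final r <= nth 0 beta r.
Proof. exact: dec_fill_le. Qed.

Lemma dec_final_ge_box r j : dec_box r j -> j <= dec_final r.
Proof.
move=> dec_rj; apply: (dec_fill_ge_box dec_rj).
by rewrite ltnS (skew_le_last_col (dec_box_skew dec_rj)).
Qed.

Lemma dec_finalP r : dec_final r = nth 0 A r \/ dec_box r (dec_final r).
Proof. by rewrite /dec_final; case: (dec_fillP last_col.+1 r) => [->|[]]; [left|right]. Qed.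

Definition inc_box j r := skew r j && ~~ dec_box r j.

Lemma inc_box_beta j r : inc_box j r -> nth 0 beta r = j.
Proof.
case/andP => skj not_dec; have /andP [ltA le_j] := skj.
apply/eqP; rewrite eqn_leq le_j andbT leqNgt; move: not_dec; apply: contra => lt_j.
by apply: dec_box_right; rewrite // /skew lt_j andbT; lia.
Qed.

Lemma dec_box_pred r j : skew r j -> nth 0 A r < j.-1 -> dec_box r j.-1.
Proof.
move=> skj ltA; apply: dec_box_right; first by rewrite /skew ltA /=; case/andP: skj; lia.
by rewrite (_ : j.-1.+1 = j) //; lia.
Qed.

Lemma dec_final_inc_box j r : inc_box j r -> dec_final r = j.-1.
Proof.
move=> inc_jr; have beta_r := inc_box_beta inc_jr; case/andP: inc_jr => skj not_dec.
have ge_j1 : j.-1 <= dec_final r.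
  case: (ltnP (nth 0 A r) j.-1) => [ltA|geA].
    exact: dec_final_ge_box (dec_box_pred skj ltA).
  exact: leq_trans geA (dec_final_ge _).
have neq_j : dec_final r != j.
  apply/eqP => final_r; case: (dec_finalP r) => [Ar|].
    by move: skj; rewrite /skew -Ar final_r ltnn.
  by rewrite final_r (negbTE not_dec).
by have := dec_final_le r; rewrite beta_r; lia.
Qed.

Lemma dec_final_full j r : nth 0 beta r = j -> ~~ inc_box j r -> dec_final r = j.
Proof.
move=> beta_r; rewrite /inc_box negb_and negbK => /orP [not_skj|dec_rj].
  have Ar : nth 0 A r = j.
    by move: not_skj (apad_le r); rewrite /skew beta_r leqnn andbT -leqNgt; lia.
  by have := dec_final_ge r; have := dec_final_le r; rewrite Ar beta_r; lia.
by have := dec_final_ge_box dec_rj; have := dec_final_le r; rewrite beta_r; lia.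
Qed.

(* The shape after the increasing part has filled the columns [>= j]. *)
Definition inc_stage j :=
  mkseq (fun r => if j <= nth 0 beta r then nth 0 beta r else dec_final r) (size beta).

Lemma inc_stage_last : inc_stage last_col.+1 = dec_stage last_col.+1.
Proof.
apply: eq_in_mkseq => r ltr; rewrite [LHS]/=; case: ifP => // gt_last.
have Ar : nth 0 A r = nth 0 beta r.
  apply/eqP; rewrite eqn_leq apad_le /= leqNgt; apply/negP => ltA.
  have : skew r (nth 0 beta r) by rewrite /skew ltA leqnn.
  by move/skew_le_last_col; rewrite leqNgt gt_last.
by apply/eqP; rewrite /dec_final eqn_leq dec_fill_le -Ar dec_fill_ge.
Qed.

Lemma inc_stage1 : inc_stage 1 = beta.
Proof. by rewrite -[RHS](mkseq_nth 0); apply: eq_in_mkseq => r ltr; rewrite beta_gt0. Qed.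

Definition inc_count j := count (inc_box j) (iota 0 (size beta)).

(* This lets [t_j] fill the increasing boxes of column [j] from the top down. *)
Lemma inc_box_above j r r' : 2 <= j -> j <= last_col -> inc_box j r -> r' < r ->
  nth 0 (inc_stage j.+1) r' = j.-1 -> inc_box j r'.
Proof.
move=> ge2j le_last inc_jr ltr' stage_r'.
have ltr'N : r' < size beta by apply: ltn_trans ltr' (skew_row_lt (proj1 (andP inc_jr))).
move: stage_r'; rewrite nth_mkseq //; case: ifP => [|le_beta final_r']; first lia.
case: (ltnP (nth 0 beta r') j) => [lt_beta|ge_beta]; last first.
  have beta_r' : nth 0 beta r' = j by lia.
  apply/andP; split.
    by rewrite /skew beta_r' leqnn andbT; have := dec_final_ge r'; rewrite final_r'; lia.
  by apply/negP => /dec_final_ge_box; lia.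
have beta_r' : nth 0 beta r' = j.-1 by have := dec_final_le r'; lia.
case: (dec_finalP r') => [Ar'|].
  have := skew_flag ge2j (proj1 (andP inc_jr)) ltr'; rewrite -Ar' final_r' => /(_ erefl).
  by rewrite beta_r'; lia.
rewrite final_r' /dec_box => /and3P [_ _ /orP [/eqP last_j|]]; first lia.
by rewrite (_ : j.-1.+1 = j) ?/skew ?beta_r'; lia.
Qed.

Lemma zact_inc_stage j : 2 <= j -> j <= last_col ->
  zact (nseq (inc_count j) j) (inc_stage j.+1) = Some (inc_stage j).
Proof.
move=> ge2j le_last; have j1_gt0 : 0 < j.-1 by lia.
have stage_j1 r : r < size (inc_stage j.+1) -> inc_box j r ->
    nth 0 (inc_stage j.+1) r = j.-1.
  rewrite size_mkseq => ltr inc_jr.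
  by rewrite nth_mkseq // (inc_box_beta inc_jr) ltnn (dec_final_inc_box inc_jr).
have := zact_nseq_rows j1_gt0 stage_j1 (fun r r' _ => @inc_box_above j r r' ge2j le_last).
rewrite size_mkseq (ltn_predK ge2j) -/(inc_count j) => ->; congr Some.
apply: eq_in_mkseq => r ltr; rewrite nth_mkseq //.
case: (ltngtP (nth 0 beta r) j) => beta_r; last first.
  case inc_jr: (inc_box j r); first by rewrite (dec_final_inc_box inc_jr); lia.
  by rewrite (dec_final_full beta_r (negbT inc_jr)) addn0.
all: by case inc_jr: (inc_box j r); rewrite ?addn0 //; have := inc_box_beta inc_jr; lia.
Qed.

Lemma inc_box1 r : inc_box 1 r = (r < shift - dec_col 1).
Proof.
rewrite /inc_box skew1; case dec1: (dec_col 1); last first.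
  have -> : dec_box r 1 = false by apply/negP => /dec_box_col; rewrite dec1.
  by rewrite andbT subn0.
have dec_last : dec_box shift.-1 1 := dec1.
have lt_last : shift.-1 < shift by have := dec_box_skew dec_last; rewrite skew1.
case: (eqVneq r shift.-1) => [->|neq_r]; first by rewrite dec_last; lia.
have -> : dec_box r 1 = false by apply/negP => /dec_box_entry_row; apply/eqP.
by rewrite andbT; move: neq_r => /eqP; lia.
Qed.

Lemma zact_inc_stage1 : zact (nseq (inc_count 1) 1) (inc_stage 2) = Some (inc_stage 1).
Proof.
set z := shift - dec_col 1.
have le_z : z <= size beta by rewrite /z; lia.
have count1 : inc_count 1 = z.
  by rewrite /inc_count (eq_count inc_box1) count_ltn_iota.
have drop_comp : composition (drop z beta).
  by apply/allP => x /mem_drop; apply: (allP beta_comp).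
have beta_split : beta = nseq z 1 ++ drop z beta.
  apply: (@eq_from_nth _ 0) => [|r]; first by rewrite size_cat size_nseq size_drop; lia.
  move=> ltr; rewrite nth_cat size_nseq nth_drop; case: ifP => ltz.
    by rewrite nth_nseq ltz; apply: (@inc_box_beta 1); rewrite inc_box1.
  by rewrite subnKC // leqNgt ltz.
have stage2 : inc_stage 2 = nseq z 0 ++ drop z beta.
  apply: (@eq_from_nth _ 0) => [|r].
    by rewrite size_mkseq size_cat size_nseq size_drop; lia.
  rewrite size_mkseq => ltr; rewrite nth_mkseq // nth_cat size_nseq nth_drop.
  case: (ltnP r z) => ltz.
    have inc1 : inc_box 1 r by rewrite inc_box1.
    by rewrite nth_nseq ltz (inc_box_beta inc1) (dec_final_inc_box inc1).
  rewrite subnKC //; case: ifP => // lt2.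
  have beta1 : nth 0 beta r = 1 by have := beta_gt0 ltr; lia.
  by rewrite beta1 (dec_final_full beta1) // inc_box1 -leqNgt.
by rewrite count1 stage2 zact_nseq1 // -beta_split inc_stage1.
Qed.

Definition inc_word j := flatten [seq nseq (inc_count i) i | i <- iota j (last_col.+1 - j)].

Lemma inc_word_S j : j <= last_col -> inc_word j = nseq (inc_count j) j ++ inc_word j.+1.
Proof. by move=> le_last; rewrite /inc_word subSn //= subSS. Qed.

Lemma zact_inc_word k : k <= last_col ->
  zact (inc_word (last_col.+1 - k)) (inc_stage last_col.+1) =
    Some (inc_stage (last_col.+1 - k)).
Proof.
elim: k => [|k IH] le_k; first by rewrite subn0 /inc_word subnn.
have le_j : last_col.+1 - k.+1 <= last_col by lia.
rewrite inc_word_S // zact_cat (_ : (last_col.+1 - k.+1).+1 = last_col.+1 - k); last by lia.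
rewrite IH ?(ltnW le_k) //= (_ : last_col.+1 - k = (last_col.+1 - k.+1).+1); last by lia.
case: (ltnP 1 (last_col.+1 - k.+1)) => [lt1|le1]; first exact: zact_inc_stage.
have -> : last_col.+1 - k.+1 = 1 by lia.
exact: zact_inc_stage1.
Qed.

Definition strip_word := inc_word 1 ++ dec_word last_col.

Lemma zact_strip_word : zact strip_word A = Some beta.
Proof.
rewrite /strip_word zact_cat zact_dec_word /= -inc_stage_last.
by have := zact_inc_word (leqnn last_col); rewrite subSnn inc_stage1.
Qed.

Lemma dec_col_last : dec_col last_col.
Proof. by apply/and3P; rewrite skew_entry_row ?occupied_last_col // !eqxx. Qed.

Lemma dec_word_last : dec_word last_col = last_col :: dec_word last_col.-1.
Proof.
have last_S : last_col = last_col.-1.+1 by have := last_col_gt0; lia.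
by rewrite {1}last_S dec_word_S -last_S dec_col_last.
Qed.

Lemma mem_dec_word y : (y \in dec_word last_col) = dec_col y && (0 < y <= last_col).
Proof. by rewrite mem_filter mem_rev mem_iota add1n ltnS. Qed.

Lemma mem_inc_word y : y \in inc_word 1 -> (0 < inc_count y) && (0 < y <= last_col).
Proof.
case/flatten_mapP => i; rewrite mem_iota add1n subn1 /= => le_i.
by rewrite mem_nseq => /andP [cnt_i /eqP ->]; rewrite cnt_i.
Qed.

Lemma mem_strip_word y : (y \in strip_word) = occupied y.
Proof.
apply/idP/idP.
  rewrite mem_cat => /orP [/mem_inc_word /andP [cnt_y _]|].
    move: cnt_y; rewrite /inc_count -has_count => /hasP [r _ /andP [sky _]].
    by apply/occupiedP; exists r.
  rewrite mem_dec_word => /andP [dec_y _].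
  by apply/occupiedP; exists (entry_row y); apply: dec_box_skew.
move=> occ; have sky := skew_entry_row occ.
have range_y : 0 < y <= last_col by rewrite (skew_col_gt0 sky) (skew_le_last_col sky).
rewrite mem_cat; case dec_y: (dec_col y); first by rewrite mem_dec_word dec_y range_y orbT.
apply/orP; left; apply/flatten_mapP; exists y; first by rewrite mem_iota add1n subn1 ltnS.
rewrite mem_nseq eqxx andbT /inc_count -has_count; case/occupiedP: occ => r skr.
apply/hasP; exists r; first by rewrite mem_iota add0n (skew_row_lt skr).
by rewrite /inc_box skr /=; apply: contraFN dec_y; apply: dec_box_col.
Qed.

Lemma inc_word_sorted k : k <= last_col ->
  [/\ sorted leq (inc_word (last_col.+1 - k) ++ [:: last_col]),
      all (leq (last_col.+1 - k)) (inc_word (last_col.+1 - k))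
    & all (fun x => x <= last_col) (inc_word (last_col.+1 - k))].
Proof.
elim: k => [|k IH] le_k; first by rewrite subn0 /inc_word subnn.
have [sorted_k ge_k le_last] := IH (ltnW le_k).
have le_j : last_col.+1 - k.+1 <= last_col by lia.
rewrite inc_word_S // (_ : (last_col.+1 - k.+1).+1 = last_col.+1 - k); last by lia.
have ge_k1 : all (leq (last_col.+1 - k.+1)) (inc_word (last_col.+1 - k)).
  by apply: sub_all ge_k => x /=; lia.
split.
- rewrite -catA; apply: sorted_nseq_cat => //.
  by rewrite all_cat /= le_j ge_k1.
- by rewrite all_cat all_nseq leqnn orbT ge_k1.
- by rewrite all_cat le_last andbT all_nseq le_j orbT.
Qed.

Lemma strip_word_hook : reverse_hookword strip_word.
Proof.
exists (size (inc_word 1)); have [sorted_inc _ _] := inc_word_sorted (leqnn last_col).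
rewrite subSnn in sorted_inc.
rewrite /strip_word dec_word_last size_cat /= addnS ltnS leq_addr; split => //; split.
  by rewrite take_cat ltnNge leqnSn /= subSnn /= take0.
rewrite drop_cat ltnn subnn drop0 -dec_word_last.
apply: sorted_filter; first by move=> a b c lt_ba lt_cb; apply: ltn_trans lt_cb lt_ba.
by rewrite rev_sorted; apply: iota_ltn_sorted.
Qed.

Lemma strip_word_CRHW : CRHW (size strip_word) strip_word.
Proof.
split=> //; split; [|split; [exact: strip_word_hook|]].
  by apply/allP => y; rewrite mem_strip_word => /occupiedP [r /skew_col_gt0].
move=> x y z; rewrite !mem_strip_word => occ_x occ_z xyz.
exact: occupied_interval xyz occ_x occ_z.
Qed.

End StripWord.

Theorem mainTheorem6 (alpha beta : seq nat) (n : nat) :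
  composition alpha -> 1 <= n -> ltc alpha beta ->
  nc_border_strip beta alpha -> skew_size beta alpha = n ->
  exists w, CRHW n w /\ act_word w alpha = Some beta.
Proof.
move=> alpha_comp n_gt0 lt_ab strip size_n.
have [w0 w0_ab] := ltc_act_word alpha_comp lt_ab.
have [beta_comp size_le _] := act_word_composition alpha_comp w0_ab.
have flag := zact_flagged (zact_apad alpha_comp w0_ab).
have skew_gt0 : 0 < skew_size beta alpha by rewrite size_n.
pose w := strip_word size_le skew_gt0.
have w_ab : act_word w alpha = Some beta.
  have := zact_strip_word alpha_comp beta_comp size_le flag strip skew_gt0.
  exact: zact_unpad alpha_comp beta_comp.
have [_ _ sum_w] := act_word_composition alpha_comp w_ab.
have size_w : size w = n by rewrite -size_n (skew_size_sumn size_le flag.1) sum_w addKn.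
by exists w; rewrite -size_w; split=> //; apply: strip_word_CRHW.
Qed.
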